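(* Let there be $p$ predictors $X_1,\dots,X_p$ and let $\widehat{m}^{(1)},\dots,\widehat{m}^{(B)}\subseteq\{1,\dots,p\}$ be bootstrap models, i.e. independent realizations of a random selected model. Fix a width $w\in\{0,\dots,p\}$. Let $\{\widehat{m}_{L,1},\widehat{m}_{U,1}\}$ be a maximizer of $\widehat{r}(m_1,m_2)$ over all pairs with $m_1\subseteq m_2\subseteq\{1,\dots,p\}$ and $|m_2|-|m_1|=w$ (Algorithm 1). Let $\overline{\pi}_j=\frac1B\sum_{b=1}^B I(j\in\widehat{m}^{(b)})$, let $(u_1,\dots,u_p)$ be the ordering of $\{1,\dots,p\}$ with $\overline{\pi}_{u_1}>\cdots>\overline{\pi}_{u_p}$ (assuming no ties), and let $\{\widehat{m}_{L,2},\widehat{m}_{U,2}\}=\{\{u_1,\dots,u_{k^\ast}\},\{u_1,\dots,u_{k^\ast+w}\}\}$ where $k^\ast$ maximizes $\widehat{r}(\{u_1,\dots,u_k\},\{u_1,\dots,u_{k+w}\})$ over $0\le k\le p-w$ (Algorithm 2). Assume (A.3): the events $I(X_j)$, $j=1,\dots,p$, are mutually independent, where $I(X_j)$ denotes the event that $X_j$ is selected in the model (i.e. $j$ belongs to the random selected model). Then, as $B\to\infty$, $$\left|\widehat{r}(\widehat{m}_{L,1},\widehat{m}_{U,1})-\widehat{r}(\widehat{m}_{L,2},\widehat{m}_{U,2})\right|=o_p(1).$$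
   Context: Models are identified with index sets of predictors, i.e. subsets of $\{1,\dots,p\}$; $|m|$ denotes cardinality. For nested models $m_1\subseteq m_2$, the bootstrap coverage rate is $\widehat{r}(m_1,m_2)=\frac1B\sum_{b=1}^B I(m_1\subseteq\widehat{m}^{(b)}\subseteq m_2)$, with $I(\cdot)$ the indicator function. *)

From HB Require Import structures.
From mathcomp Require Import all_boot all_order all_algebra all_fingroup.
From mathcomp Require Import all_classical all_reals all_analysis.
Set Implicit Arguments. Unset Strict Implicit. Unset Printing Implicit Defensive.
Import Order.TTheory GRing.Theory Num.Theory.
Local Open Scope ring_scope.

(* Models are subsets of {1,..,p}, represented as {set 'I_p}.
   A random selected model has distribution P : {ffun {set 'I_p} -> R}. *)

Definition is_distr (R : realType) (p : nat) (P : {ffun {set 'I_p} -> R}) :=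
  (forall m, 0 <= P m) /\ \sum_(m : {set 'I_p}) P m = 1.

Definition selection_events_indep (R : realType) (p : nat)
  (P : {ffun {set 'I_p} -> R}) :=
  forall S : {set 'I_p},
    \sum_(m : {set 'I_p} | S \subset m) P m
    = \prod_(j in S) \sum_(m : {set 'I_p} | j \in m) P m.

Definition boot_prob (R : realType) (p : nat) (P : {ffun {set 'I_p} -> R})
  (B : nat) (E : pred (B.-tuple {set 'I_p})) : R :=
  \sum_(s : B.-tuple {set 'I_p} | E s) \prod_(b < B) P (tnth s b).

Definition rhat (R : realType) (p B : nat) (s : B.-tuple {set 'I_p})
  (m1 m2 : {set 'I_p}) : R :=
  (\sum_(b < B) ((m1 \subset tnth s b) && (tnth s b \subset m2))%:R) / B%:R.

Definition pibar (R : realType) (p B : nat) (s : B.-tuple {set 'I_p}) (j : 'I_p) : R :=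
  (\sum_(b < B) (j \in tnth s b)%:R) / B%:R.

Definition alg1_maximizer (R : realType) (p B w : nat) (s : B.-tuple {set 'I_p})
  (mLU : {set 'I_p} * {set 'I_p}) : Prop :=
  [/\ mLU.1 \subset mLU.2, #|mLU.2| = (#|mLU.1| + w)%N &
   forall m1 m2 : {set 'I_p}, m1 \subset m2 -> #|m2| = (#|m1| + w)%N ->
     rhat R s m1 m2 <= rhat R s mLU.1 mLU.2].

(* u is an ordering u_1,..,u_p (here u 0, .., u (p-1)) of {1..p} by
   nonincreasing pi-bar (strictly decreasing when there are no ties) *)
Definition ordered_by_pibar (R : realType) (p B : nat) (s : B.-tuple {set 'I_p})
  (u : 'S_p) : Prop :=
  forall i j : 'I_p, (i < j)%N -> pibar R s (u j) <= pibar R s (u i).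

Definition top_set (p : nat) (u : 'S_p) (k : nat) : {set 'I_p} :=
  u @: [set i : 'I_p | (i < k)%N].

Definition alg2_kstar (R : realType) (p B w : nat) (s : B.-tuple {set 'I_p})
  (u : 'S_p) (k : nat) : Prop :=
  (k <= p - w)%N /\
  forall k', (k' <= p - w)%N ->
    rhat R s (top_set u k') (top_set u (k' + w)) <= rhat R s (top_set u k) (top_set u (k + w)).

From HB Require Import structures.
From mathcomp Require Import all_boot all_order all_algebra all_fingroup.
From mathcomp Require Import all_classical all_reals all_analysis.
From mathcomp Require Import ring lra zify.
Import Order.TTheory GRing.Theory Num.Theory numFieldNormedType.Exports.
Local Open Scope classical_set_scope.
Local Open Scope ring_scope.
Set Implicit Arguments. Unset Strict Implicit. Unset Printing Implicit Defensive.

(* Under (A.3) the population coverage probability factorizes,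
     r(m1, m2) = prod_(j in m1) pi_j * prod_(j notin m2) (1 - pi_j),
   so among nested pairs of width w with a given |m1| it is maximized by the
   top sets of an ordering of the predictors by decreasing pi_j (an exchange
   argument).
   By Chebyshev's inequality and a union bound over the finitely many events
   involved, with probability tending to 1 every bootstrap rate r^(m1, m2) is
   within eps/2 of r(m1, m2) and every pi-bar_j is within half the smallest
   nonzero gap of pi_j, so that the pi-bar ordering u is also a pi ordering.
   On that event
     r^(alg1) < r(alg1) + eps/2 <= r(top sets) + eps/2 < r^(top sets) + eps
              <= r^(alg2) + eps <= r^(alg1) + eps. *)

Lemma sum_tuple_prod (R : comPzSemiRingType) (T : finType) B (G : 'I_B -> T -> R) :
  \sum_(s : B.-tuple T) \prod_(b < B) G b (tnth s b) = \prod_(b < B) \sum_(t : T) G b t.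
Proof.
rewrite bigA_distr_bigA /=.
rewrite (reindex (fun f : {ffun 'I_B -> T} => [tuple f i | i < B])) /=.
  by apply: eq_bigr => f _; apply: eq_bigr => b _; rewrite tnth_mktuple.
exists (fun s : B.-tuple T => [ffun i => tnth s i]) => [f _|s _].
  by apply/ffunP => i; rewrite ffunE tnth_mktuple.
by apply: eq_from_tnth => i; rewrite tnth_mktuple ffunE.
Qed.

Section IidSample.
Variables (R : realType) (T : finType) (P : T -> R).
Hypotheses (P_ge0 : forall t, 0 <= P t) (P_sum1 : \sum_t P t = 1).
Implicit Types (A : pred T).

Definition prob (A : pred T) : R := \sum_(t | A t) P t.

Definition iid_weight B (s : B.-tuple T) : R := \prod_(b < B) P (tnth s b).

Definition iid_prob B (E : pred (B.-tuple T)) : R := \sum_(s | E s) iid_weight s.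

Definition iid_expect B (f : B.-tuple T -> R) : R := \sum_s iid_weight s * f s.

Definition freq B (A : pred T) (s : B.-tuple T) : R :=
  (\sum_(b < B) (A (tnth s b))%:R) / B%:R.

Lemma prob_ge0 A : 0 <= prob A.
Proof. exact: sumr_ge0. Qed.

Lemma prob_le1 A : prob A <= 1.
Proof. by rewrite -P_sum1 [leRHS](bigID A) lerDl sumr_ge0. Qed.

Lemma sum_mul_indicator A : \sum_t P t * (A t)%:R = prob A.
Proof.
by rewrite [RHS]big_mkcond; apply: eq_bigr => t _; case: (A t); rewrite ?mulr1 ?mulr0.
Qed.

Lemma iid_weight_ge0 B (s : B.-tuple T) : 0 <= iid_weight s.
Proof. exact: prodr_ge0. Qed.

Lemma iid_prob_ge0 B (E : pred (B.-tuple T)) : 0 <= iid_prob E.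
Proof. by apply: sumr_ge0 => s _; exact: iid_weight_ge0. Qed.

Lemma eq_iid_expect B (f g : B.-tuple T -> R) :
  f =1 g -> iid_expect f = iid_expect g.
Proof. by move=> efg; apply: eq_bigr => s _; rewrite efg. Qed.

Lemma iid_expect_sum B (I : finType) (f : I -> B.-tuple T -> R) :
  iid_expect (fun s => \sum_i f i s) = \sum_i iid_expect (f i).
Proof.
by rewrite /iid_expect; under eq_bigr do rewrite mulr_sumr; exact: exchange_big.
Qed.

Lemma iid_expect_prod B (G : 'I_B -> T -> R) :
  iid_expect (fun s => \prod_b G b (tnth s b)) = \prod_b \sum_t P t * G b t.
Proof.
rewrite -(sum_tuple_prod (fun b t => P t * G b t)).
by apply: eq_bigr => s _; rewrite big_split.
Qed.

Lemma iid_expect_tnth B (b : 'I_B) (g : T -> R) :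
  iid_expect (fun s => g (tnth s b)) = \sum_t P t * g t.
Proof.
rewrite (@eq_iid_expect _ _ (fun s => \prod_d (if d == b then g (tnth s d) else 1))).
  rewrite (iid_expect_prod (fun d t => if d == b then g t else 1)) (bigD1 b) //= eqxx.
  rewrite [X in _ * X]big1 ?mulr1 // => d /negPf ->.
  by under eq_bigr do rewrite mulr1.
by move=> s; rewrite -big_mkcond big_pred1_eq.
Qed.

Lemma iid_expect_tnth2 B (b c : 'I_B) (g h : T -> R) : b != c ->
  iid_expect (fun s => g (tnth s b) * h (tnth s c))
  = (\sum_t P t * g t) * (\sum_t P t * h t).
Proof.
move=> neq_bc; have neq_cb : c != b by rewrite eq_sym.
pose G d t := (if d == b then g t else 1) * (if d == c then h t else 1).
rewrite (@eq_iid_expect _ _ (fun s => \prod_d G d (tnth s d))); last first.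
  by move=> s; rewrite big_split /= -!big_mkcond !big_pred1_eq.
rewrite (iid_expect_prod G) (bigD1 b) // (bigD1 c) //= [X in _ * (_ * X)]big1 ?mulr1; last first.
  by move=> d /andP[/negPf db /negPf dc]; rewrite /G db dc; under eq_bigr do rewrite !mulr1.
rewrite /G eqxx (negPf neq_bc) (negPf neq_cb) eqxx.
by congr (_ * _); apply: eq_bigr => t _; rewrite ?mulr1 ?mul1r.
Qed.

Lemma iid_expect_sum_sqr B (X : T -> R) :
  \sum_t P t * X t = 0 -> (forall t, X t ^+ 2 <= 1) ->
  iid_expect (fun s : B.-tuple T => (\sum_(b < B) X (tnth s b)) ^+ 2) <= B%:R.
Proof.
move=> mean0 sqr_le1.
rewrite (@eq_iid_expect _ _ (fun s => \sum_b \sum_c X (tnth s b) * X (tnth s c))); last first.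
  by move=> s; rewrite expr2 big_distrlr.
rewrite iid_expect_sum -[B in B%:R]card_ord -sumr_const; apply: ler_sum => b _.
rewrite iid_expect_sum (bigD1 b) //= big1 ?addr0; last first.
  by move=> c neq_cb; rewrite iid_expect_tnth2 1?eq_sym // mean0 mul0r.
rewrite (iid_expect_tnth b (fun t => X t ^+ 2)) -P_sum1.
by apply: ler_sum => t _; apply: ler_piMr; [exact: P_ge0 | exact: sqr_le1].
Qed.

Lemma iid_prob_le_expect_sqr B (f : B.-tuple T -> R) (d : R) : 0 < d ->
  iid_prob (fun s => d <= `|f s|) <= iid_expect (fun s => f s ^+ 2) / d ^+ 2.
Proof.
move=> d_gt0; have d2_gt0 : 0 < d ^+ 2 by rewrite exprn_gt0.
rewrite /iid_expect mulr_suml [leRHS](bigID (fun s => d <= `|f s|)) /=.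
apply: ler_wpDr.
  by apply: sumr_ge0 => s _; rewrite -mulrA mulr_ge0 ?iid_weight_ge0 ?divr_ge0 ?sqr_ge0 ?ltW.
apply: ler_sum => s dev_s; rewrite -mulrA; apply: ler_peMr; first exact: iid_weight_ge0.
rewrite ler_pdivlMr // mul1r.
by rewrite -[f s ^+ 2]real_normK ?num_real // lerXn2r ?nnegrE ?(ltW d_gt0).
Qed.

Lemma iid_prob_freq_dev B A (d : R) : (0 < B)%N -> 0 < d ->
  iid_prob (fun s : B.-tuple T => d <= `|freq A s - prob A|) <= (d ^+ 2 * B%:R)^-1.
Proof.
move=> B_gt0 d_gt0.
have B_neq0 : (B%:R : R) != 0 by rewrite pnatr_eq0 -lt0n.
pose X t := (A t)%:R - prob A.
have mean0 : \sum_t P t * X t = 0.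
  under eq_bigr do rewrite mulrBr.
  by rewrite sumrB sum_mul_indicator -mulr_suml P_sum1 mul1r subrr.
have X_sqr_le1 t : X t ^+ 2 <= 1.
  have := prob_ge0 A; have := prob_le1 A; rewrite /X; case: (A t) => /= ? ?; nra.
have centered s : freq A s - prob A = (\sum_(b < B) X (tnth s b)) / B%:R.
  rewrite /freq sumrB sumr_const card_ord mulrBl -[prob A *+ B]mulr_natr mulfK //.
apply: le_trans (iid_prob_le_expect_sqr (fun s => freq A s - prob A) d_gt0) _.
rewrite (@eq_iid_expect _ _ (fun s => (\sum_(b < B) X (tnth s b)) ^+ 2 / B%:R ^+ 2)); last first.
  by move=> s; rewrite centered expr_div_n.
have -> : iid_expect (fun s => (\sum_(b < B) X (tnth s b)) ^+ 2 / B%:R ^+ 2)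
    = iid_expect (fun s => (\sum_(b < B) X (tnth s b)) ^+ 2) / B%:R ^+ 2.
  by rewrite /iid_expect mulr_suml; apply: eq_bigr => s _; rewrite mulrA.
have -> : (d ^+ 2 * B%:R)^-1 = B%:R / B%:R ^+ 2 / d ^+ 2.
  by field; rewrite B_neq0 gt_eqF.
apply: ler_wpM2r; first by rewrite invr_ge0 exprn_ge0 // ltW.
apply: ler_wpM2r; first by rewrite invr_ge0 exprn_ge0.
exact: iid_expect_sum_sqr mean0 X_sqr_le1.
Qed.

Lemma iid_prob_le_sum B (I : finType) (E : pred (B.-tuple T))
    (F : I -> pred (B.-tuple T)) :
  (forall s, E s -> exists i, F i s) -> iid_prob E <= \sum_i iid_prob (F i).
Proof.
move=> E_cover; rewrite /iid_prob.
under [leRHS]eq_bigr do rewrite big_mkcond /=.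
rewrite exchange_big [leLHS]big_mkcond /=; apply: ler_sum => s _.
have term_ge0 i : 0 <= (if F i s then iid_weight s else 0).
  by case: ifP => // _; exact: iid_weight_ge0.
case: ifP => [/E_cover[i Fis]|_]; last exact: sumr_ge0.
by rewrite (bigD1 i) //= Fis lerDl sumr_ge0.
Qed.

Lemma iid_prob_dev_cvg0 (I : finType) (A : I -> pred T) (d : R)
    (E : forall B, pred (B.-tuple T)) : 0 < d ->
  (forall B s, E B s -> exists i, d <= `|freq (A i) s - prob (A i)|) ->
  (fun B => iid_prob (E B)) @ \oo --> 0.
Proof.
move=> d_gt0 E_dev; pose K := #|I|%:R / d ^+ 2.
have E_le B : iid_prob (E B.+1) <= K * harmonic B.
  apply: le_trans (iid_prob_le_sum (E_dev B.+1)) _.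
  apply: le_trans (ler_sum _ (fun i _ => iid_prob_freq_dev (A i) (ltn0Sn B) d_gt0)) _.
  by rewrite sumr_const -[_ *+ _]mulr_natl invfM mulrA.
rewrite -(cvg_shiftS (fun B => iid_prob (E B))).
apply: (squeeze_cvgr (f := fun=> 0) (h := fun B => K * harmonic B)).
- by apply: nearW => B; rewrite iid_prob_ge0 E_le.
- exact: cvg_cst.
- by rewrite -(mulr0 K); apply: cvgMl_tmp; exact: cvg_harmonic.
Qed.

End IidSample.

Lemma ler_prod_dominant (R : realDomainType) (I : finType) (f : I -> R) (S U : {set I}) :
  (forall i, 0 <= f i) -> #|S| = #|U| ->
  (forall x y, x \in U -> y \notin U -> f y <= f x) ->
  \prod_(i in S) f i <= \prod_(i in U) f i.
Proof.
move=> f_ge0 card_SU U_dom.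
rewrite (big_setID U) [leRHS](big_setID S) /= finset.setIC.
apply: ler_wpM2l; first exact: prodr_ge0.
have card_D : #|S :\: U| = #|U :\: S| by rewrite !cardsD card_SU finset.setIC.
have [D0|[x0 x0D]] := set_0Vmem (U :\: S).
  by move: card_D; rewrite D0 cards0 => /cards0_eq ->; rewrite !big_set0.
have [x xD x_min] := arg_minP f x0D.
have xU : x \in U by move: (xD : x \in U :\: S); rewrite inE => /andP[].
apply: (@le_trans _ _ (f x ^+ #|S :\: U|)).
  rewrite -prodr_const; apply: ler_prod => y yD; rewrite f_ge0 /=.
  by move: yD; rewrite inE => /andP[yU _]; exact: U_dom.
by rewrite card_D -prodr_const; apply: ler_prod => y yD; rewrite f_ge0 x_min.
Qed.

Section TopSet.
Variables (p : nat) (u : 'S_p).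

Lemma mem_top_set k x : (x \in top_set u k) = ((u^-1)%g x < k)%N.
Proof.
apply/imsetP/idP => [[i i_lt ->]|x_lt]; first by rewrite permK; rewrite inE in i_lt.
by exists ((u^-1)%g x); rewrite ?inE ?permKV.
Qed.

Lemma card_top_set k : (k <= p)%N -> #|top_set u k| = k.
Proof.
move=> k_le; rewrite card_imset; last exact: perm_inj.
have -> : [set i : 'I_p | (i < k)%N]%SET = widen_ord k_le @: [set: 'I_k]%SET.
  apply/setP => i; rewrite inE; apply/idP/imsetP => [i_lt|[j _ ->]]; last exact: (ltn_ord j).
  by exists (Ordinal i_lt) => //; apply: val_inj.
by rewrite card_imset ?cardsT ?card_ord // => i j /(congr1 val) /= /val_inj.
Qed.

Lemma top_set_subset k l : (k <= l)%N -> top_set u k \subset top_set u l.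
Proof.
by move=> k_le; apply/fintype.subsetP => x; rewrite !mem_top_set => /leq_trans; apply.
Qed.

Lemma top_set_dominant (R : realDomainType) (f : 'I_p -> R) k x y :
  (forall i j : 'I_p, (i < j)%N -> f (u j) <= f (u i)) ->
  x \in top_set u k -> y \notin top_set u k -> f y <= f x.
Proof.
rewrite !mem_top_set -leqNgt => u_sorted x_top y_top.
by rewrite -(permKV u x) -(permKV u y); apply: u_sorted; exact: leq_trans y_top.
Qed.

End TopSet.

Section CoverProb.
Variables (R : realType) (p : nat) (P : {ffun {set 'I_p} -> R}).
Hypotheses (P_indep : selection_events_indep P)
  (P_ge0 : forall m, 0 <= P m) (P_sum1 : \sum_m P m = 1).

Definition incl_prob (j : 'I_p) : R := prob P (fun m => j \in m).

Definition cover_prob (m1 m2 : {set 'I_p}) : R :=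
  prob P (fun m => (m1 \subset m) && (m \subset m2)).

Lemma cover_probU1 (m1 m2 : {set 'I_p}) j : j \notin m2 ->
  cover_prob m1 (j |: m2) = cover_prob (j |: m1) (j |: m2) + cover_prob m1 m2.
Proof.
move=> j_m2; rewrite /cover_prob /prob (bigID (fun m : {set 'I_p} => j \in m)) /=.
congr (_ + _); apply: eq_bigl => m.
  by rewrite finset.subUset finset.sub1set; case: (j \in m); rewrite ?andbT ?andbF.
by rewrite -(setU1K j_m2) subsetD1 setU1K // andbA.
Qed.

Lemma cover_prob_indep (m1 m2 : {set 'I_p}) : m1 \subset m2 ->
  cover_prob m1 m2 = \prod_(j in m1) incl_prob j * \prod_(j in ~: m2) (1 - incl_prob j).
Proof.
move: {2}#|~: m2| (erefl #|~: m2|) => n.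
elim: n m1 m2 => [|n IH] m1 m2 n_eq m12.
  have sub_m2 (m : {set 'I_p}) : m \subset m2.
    apply/fintype.subsetP => j _.
    by move/cards0_eq/setP/(_ j): n_eq; rewrite !inE => /negbFE.
  rewrite (cards0_eq n_eq) big_set0 mulr1 -P_indep.
  by apply: eq_bigl => m; rewrite sub_m2 andbT.
have [j jN] : exists j, j \in ~: m2 by apply/set0Pn; rewrite -card_gt0 n_eq.
have j_m2 : j \notin m2 by rewrite inE in jN.
have j_m1 : j \notin m1 by apply: contra j_m2; exact: (fintype.subsetP m12).
have compl_eq : ~: (j |: m2) = ~: m2 :\ j.
  by rewrite finset.setCU finset.setDE finset.setIC.
have card_eq : #|~: (j |: m2)| = n.
  by move: n_eq; rewrite compl_eq (cardsD1 j) jN add1n => -[].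
have -> : cover_prob m1 m2 = cover_prob m1 (j |: m2) - cover_prob (j |: m1) (j |: m2).
  by rewrite cover_probU1 // addrC addKr.
rewrite !IH ?finset.setUS ?(fintype.subset_trans m12 (subsetU1 j m2)) //.
rewrite big_setU1 //= compl_eq [in RHS](big_setD1 j jN) /=.
ring.
Qed.

Lemma cover_prob_le_top (u : 'S_p) w (m1 m2 : {set 'I_p}) :
  (forall i j : 'I_p, (i < j)%N -> incl_prob (u j) <= incl_prob (u i)) ->
  m1 \subset m2 -> #|m2| = (#|m1| + w)%N ->
  cover_prob m1 m2 <= cover_prob (top_set u #|m1|) (top_set u (#|m1| + w)).
Proof.
move=> u_sorted m12 card_m2.
have k_le : (#|m1| + w <= p)%N.
  by rewrite -card_m2; apply: leq_trans (max_card _) _; rewrite card_ord.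
have incl_ge0 j : 0 <= incl_prob j := prob_ge0 P_ge0 _.
have incl_le1 j : incl_prob j <= 1 := prob_le1 P_ge0 P_sum1 _.
rewrite !cover_prob_indep ?top_set_subset ?leq_addr //.
apply: ler_pM.
- exact: prodr_ge0.
- by apply: prodr_ge0 => j _; rewrite subr_ge0.
- apply: ler_prod_dominant => //; last by move=> x y; exact: top_set_dominant.
  by rewrite card_top_set //; lia.
- apply: ler_prod_dominant => [j||x y]; first by rewrite subr_ge0.
    by apply/eqP; rewrite -(eqn_add2l #|m2|) cardsC card_m2 -{1}(card_top_set u k_le) cardsC.
  rewrite !inE !negbK => x_top y_top.
  by rewrite lerD2l lerN2; exact: top_set_dominant y_top x_top.
Qed.

End CoverProb.

Section Algorithms.
Variables (R : realType) (p w : nat) (P : {ffun {set 'I_p} -> R}).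
Hypotheses (P_indep : selection_events_indep P)
  (P_ge0 : forall m, 0 <= P m) (P_sum1 : \sum_m P m = 1).

Definition incl_gap : R :=
  \big[Order.min/1]_(ab : 'I_p * 'I_p | incl_prob P ab.1 != incl_prob P ab.2)
     `|incl_prob P ab.1 - incl_prob P ab.2|.

Lemma incl_gap_gt0 : 0 < incl_gap.
Proof. by apply/bigmin_gtP; split=> // ab; rewrite normr_gt0 subr_eq0. Qed.

Lemma incl_gap_le a b : incl_prob P a != incl_prob P b ->
  incl_gap <= `|incl_prob P a - incl_prob P b|.
Proof. exact: (@bigmin_le_cond _ _ _ 1 (a, b)). Qed.

Lemma incl_prob_ordered B (s : B.-tuple {set 'I_p}) (u : 'S_p) :
  (forall j, `|pibar R s j - incl_prob P j| < incl_gap / 2) ->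
  ordered_by_pibar R s u ->
  forall i j : 'I_p, (i < j)%N -> incl_prob P (u j) <= incl_prob P (u i).
Proof.
move=> pibar_close u_sorted i j lt_ij; rewrite leNgt; apply/negP => lt_incl.
have := incl_gap_le (negbT (gt_eqF lt_incl)); rewrite gtr0_norm ?subr_gt0 // => gap_le.
have := u_sorted i j lt_ij.
move: (pibar_close (u i)) (pibar_close (u j)); rewrite !ltr_norml => /andP[? ?] /andP[? ?].
lra.
Qed.

Lemma alg1_alg2_rhat_close B (s : B.-tuple {set 'I_p}) (eps : R) LU (u : 'S_p) k :
  (forall m1 m2, `|rhat R s m1 m2 - cover_prob P m1 m2| < eps / 2) ->
  (forall i j : 'I_p, (i < j)%N -> incl_prob P (u j) <= incl_prob P (u i)) ->
  alg1_maximizer R w s LU -> alg2_kstar R w s u k ->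
  `|rhat R s LU.1 LU.2 - rhat R s (top_set u k) (top_set u (k + w))| < eps.
Proof.
move=> rhat_close u_sorted [LU12 card_LU LU_max] [k_le k_max].
have k1_le : (#|LU.1| + w <= p)%N.
  by rewrite -card_LU; apply: leq_trans (max_card _) _; rewrite card_ord.
have alg2_le : rhat R s (top_set u k) (top_set u (k + w)) <= rhat R s LU.1 LU.2.
  by apply: LU_max; rewrite ?top_set_subset ?leq_addr // !card_top_set //; lia.
have top_le := k_max #|LU.1| ltac:(lia).
have cover_le := cover_prob_le_top P_indep P_ge0 P_sum1 u_sorted LU12 card_LU.
rewrite ger0_norm ?subr_ge0 //.
move: (rhat_close LU.1 LU.2) (rhat_close (top_set u #|LU.1|) (top_set u (#|LU.1| + w))).
rewrite !ltr_norml => /andP[? ?] /andP[? ?].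
lra.
Qed.

End Algorithms.

Theorem theorem2 (R : realType) (p w : nat) (hw : (w <= p)%N)
  (P : {ffun {set 'I_p} -> R}) (hP : is_distr P)
  (hA3 : selection_events_indep P)
  (alg1 : forall B : nat, B.-tuple {set 'I_p} -> {set 'I_p} * {set 'I_p})
  (halg1 : forall B (s : B.-tuple {set 'I_p}), alg1_maximizer R w s (alg1 B s))
  (u : forall B : nat, B.-tuple {set 'I_p} -> 'S_p)
  (hu : forall B (s : B.-tuple {set 'I_p}), ordered_by_pibar R s (u B s))
  (kstar : forall B : nat, B.-tuple {set 'I_p} -> nat)
  (hk : forall B (s : B.-tuple {set 'I_p}), alg2_kstar R w s (u B s) (kstar B s)) :
  forall eps : R, 0 < eps ->
    (fun B : nat => boot_prob P
       (fun s : B.-tuple {set 'I_p} =>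
          eps < `| rhat R s (alg1 B s).1 (alg1 B s).2
                   - rhat R s (top_set (u B s) (kstar B s))
                              (top_set (u B s) (kstar B s + w)) |))
    @ \oo --> (0 : R).
Proof.
move=> eps eps_gt0; case: hP => P_ge0 P_sum1.
pose tol := Order.min (eps / 2) (incl_gap P / 2).
pose A (i : {set 'I_p} * {set 'I_p} + 'I_p) : pred {set 'I_p} :=
  match i with
  | inl (m1, m2) => fun m => (m1 \subset m) && (m \subset m2)
  | inr j => fun m => j \in m
  end.
have tol_gt0 : 0 < tol by rewrite lt_min !divr_gt0 ?incl_gap_gt0.
apply: (iid_prob_dev_cvg0 P_ge0 P_sum1 (A := A) tol_gt0) => B s.
case: (boolP [exists i, tol <= `|freq R (A i) s - prob P (A i)|]) => [/existsP //|].
move=> /existsPn all_close; rewrite ltNge => /negP[]; apply: ltW.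
apply: (alg1_alg2_rhat_close hA3 P_ge0 P_sum1 _ _ (halg1 B s) (hk B s)).
- by move=> m1 m2; have := all_close (inl (m1, m2)); rewrite -ltNge lt_min => /andP[].
- apply: incl_prob_ordered (hu B s) => j.
  by have := all_close (inr j); rewrite -ltNge lt_min => /andP[].
Qed.
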